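(* Let $L\subset\mathbb{C}$ be a lattice. If for some $p_0\in\mathbb{C}$ and some $\alpha\in(0,\pi)$ there are more than three pairs of periodic trajectories of the billiard associated to $L$ which pass through $p_0$ and form the angle $\alpha$ at $p_0$ (equivalently: there are at least four directions $v\in\mathbb{C}^*$, pairwise not real-proportional, with $v\in\mathbb{R}\cdot L$ and $e^{i\alpha}v\in\mathbb{R}\cdot L$), then the elliptic curve $\mathbb{C}/L$ has complex multiplication. Conversely, if $\mathbb{C}/L$ has complex multiplication then for infinitely many $\alpha\in(0,\pi)$ and every $p_0\in\mathbb{C}$ there are infinitely many pairs of periodic trajectories passing through $p_0$ and forming the angle $\alpha$ at $p_0$.
   Context: The billiard associated to a lattice $L\subset\mathbb{C}$ is the billiard on a parallelogram table determined by $L$; directions are nonzero complex numbers, and a trajectory with direction $v\in\mathbb{C}^*$ is periodic if and only if $v\in\mathbb{R}\cdot L=\{t\lambda: t\in\mathbb{R},\lambda\in L\}$. Two periodic trajectories through $p_0$ with directions $v,v'$ form the angle $\alpha$ at $p_0$ if $v'=e^{i\alpha}v$ up to a positive real factor; pairs are counted up to real proportionality of the direction $v$. $\mathbb{C}/L$ has complex multiplication if its endomorphism ring is strictly larger than $\mathbb{Z}$, i.e. if $L$ is homothetic to $\mathbb{Z}\tau+\mathbb{Z}$ with $\tau$ an imaginary quadratic number. *)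

From Stdlib Require Export Reals ZArith List.
From Coquelicot Require Export Coquelicot.

(* The lattice L = Z w1 + Z w2, with w1, w2 R-linearly independent. *)
Definition lattice_basis (w1 w2 : C) : Prop :=
  (Re w1 * Im w2 - Im w1 * Re w2 <> 0)%R.

Definition in_lattice (w1 w2 z : C) : Prop :=
  exists m n : Z, z = Cplus (Cmult (RtoC (IZR m)) w1) (Cmult (RtoC (IZR n)) w2).

Definition in_RL (w1 w2 v : C) : Prop :=
  exists (t : R) (l : C), in_lattice w1 w2 l /\ v = Cmult (RtoC t) l.

(* A trajectory with direction v (nonzero) is periodic iff v in R.L. *)
Definition periodic_dir (w1 w2 v : C) : Prop :=
  v <> RtoC 0 /\ in_RL w1 w2 v.

Definition expi (a : R) : C := (cos a, sin a).

(* The pair of periodic trajectories through p0 with directions v and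
   e^{i a} v (these form the angle a at p0). *)
Definition periodic_pair_at_angle (w1 w2 : C) (p0 : C) (a : R) (v : C) : Prop :=
  periodic_dir w1 w2 v /\ periodic_dir w1 w2 (Cmult (expi a) v).

Definition real_proportional (v v' : C) : Prop :=
  exists t : R, v' = Cmult (RtoC t) v.

(* at least n pairs, counted up to real proportionality of v *)
Definition at_least_n_pairs (w1 w2 p0 : C) (a : R) (n : nat) : Prop :=
  exists f : nat -> C,
    (forall i, (i < n)%nat -> periodic_pair_at_angle w1 w2 p0 a (f i)) /\
    (forall i j, (i < n)%nat -> (j < n)%nat -> i <> j ->
        ~ real_proportional (f i) (f j)).

Definition infinitely_many_pairs (w1 w2 p0 : C) (a : R) : Prop :=
  forall n : nat, at_least_n_pairs w1 w2 p0 a n.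

(* C/L has complex multiplication: End(C/L) = { mu : mu L subset L } is
   strictly larger than Z. *)
Definition has_CM (w1 w2 : C) : Prop :=
  exists mu : C, (forall k : Z, mu <> RtoC (IZR k)) /\
    forall l : C, in_lattice w1 w2 l -> in_lattice w1 w2 (Cmult mu l).

(** Write [L = Z w1 + Z w2] and [D = cross w1 w2 <> 0] for the oriented area of
    its fundamental parallelogram.  Periodic directions are the real multiples of
    nonzero lattice vectors.

    Suppose the rotation [e^{ia}], [0 < a < pi], maps three pairwise
    independent periodic directions [l_i] to periodic directions:
    [e^{ia} l_i = rho_i l_i'] with [l_i, l_i'] in [L] and [rho_i] real.  Rotations
    preserve oriented area, and areas of lattice parallelograms are integral
    multiples of [D], so [z_ij = rho_i rho_j y_ij] for nonzero integers [z_ij],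
    [y_ij].  Eliminating, [rho_0^2] and [rho_0 rho_1] are rational, so a suitable
    real multiple [mu] of [e^{ia}] maps [l_0] and [l_1] into [L]; multiplying by
    the index [z_01] of [Z l_0 + Z l_1] gives a non-real lattice multiplier.  In
    particular three pairs (hence four) already force complex multiplication.

    A non-real multiplier [nu] with [Im nu > 0] gives, for each
    integer [k], the angle [a_k = arg (nu + k)]: since [e^{i a_k}] is a real
    multiple of the multiplier [nu + k], the rotation by [a_k] maps every
    periodic direction [w1 + j w2] to a periodic one.  The angles [a_k] are
    pairwise distinct, so they avoid any finite list of excluded angles. *)

From Stdlib Require Import Lra Lia Psatz Classical_Prop.

Local Open Scope R_scope.
Definition lat (w1 w2 : C) (m n : Z) : C :=
  Cplus (Cmult (RtoC (IZR m)) w1) (Cmult (RtoC (IZR n)) w2).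

(** The oriented area [Im (conj z * w)] of the parallelogram spanned by [z], [w]. *)
Definition cross (z w : C) : R := Re z * Im w - Im z * Re w.

Definition lattice_multiplier (w1 w2 mu : C) : Prop :=
  forall l, in_lattice w1 w2 l -> in_lattice w1 w2 (Cmult mu l).

Ltac C_components :=
  apply injective_projections;
  unfold lat, expi, Cmult, Cplus, Copp, RtoC; simpl.

Lemma cross_scal (r r' : R) (z w : C) :
  cross (Cmult (RtoC r) z) (Cmult (RtoC r') w) = r * r' * cross z w.
Proof. destruct z, w; unfold cross, Cmult, RtoC, Re, Im; simpl; ring. Qed.

Lemma cross_expi (a : R) (z w : C) :
  cross (Cmult (expi a) z) (Cmult (expi a) w) = cross z w.
Proof.
  destruct z as [x y], w as [u v]; unfold cross, expi, Cmult, Re, Im; simpl.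
  pose proof (sin2_cos2 a) as Hpyth; unfold Rsqr in Hpyth.
  transitivity ((sin a * sin a + cos a * cos a) * (x * v - y * u)); [ring|].
  rewrite Hpyth; ring.
Qed.

Lemma cross_lat (w1 w2 : C) (m n m' n' : Z) :
  cross (lat w1 w2 m n) (lat w1 w2 m' n')
  = (IZR m * IZR n' - IZR n * IZR m') * cross w1 w2.
Proof. destruct w1, w2; unfold cross, lat, Cmult, Cplus, RtoC, Re, Im; simpl; ring. Qed.

Lemma cramer (z w u : C) :
  Cmult (RtoC (cross z w)) u
  = Cplus (Cmult (RtoC (cross u w)) z) (Cmult (RtoC (cross z u)) w).
Proof.
  destruct z, w, u; unfold cross, Re, Im; C_components; ring.
Qed.

Lemma cross_zero_proportional (z w : C) :
  z <> RtoC 0 -> cross z w = 0 -> real_proportional z w.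
Proof.
  destruct z as [x y], w as [u v]; unfold cross, RtoC, Re, Im, real_proportional; simpl.
  intros Hz Hc.
  assert (HN : x * x + y * y <> 0).
  { intro HN; apply Hz.
    assert (x = 0) by nra; assert (y = 0) by nra; subst; reflexivity. }
  exists ((x * u + y * v) / (x * x + y * y)).
  C_components; field_simplify_eq; auto.
  - replace (u * y ^ 2) with (y * (y * u)) by ring.
    replace (y * u) with (x * v) by lra; ring.
  - replace (v * x ^ 2) with (x * (x * v)) by ring.
    replace (x * v) with (y * u) by lra; ring.
Qed.

Lemma cross_proportional (z : C) (r : R) : cross z (Cmult (RtoC r) z) = 0.
Proof. destruct z; unfold cross, Cmult, RtoC, Re, Im; simpl; ring. Qed.

Section Lattice.

Variables w1 w2 : C.
Hypothesis hL : lattice_basis w1 w2.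

Lemma in_lattice_add (l l' : C) :
  in_lattice w1 w2 l -> in_lattice w1 w2 l' -> in_lattice w1 w2 (Cplus l l').
Proof.
  intros [m [n ->]] [m' [n' ->]]; exists (m + m')%Z, (n + n')%Z.
  rewrite !plus_IZR; C_components; ring.
Qed.

Lemma in_lattice_zscale (k : Z) (l : C) :
  in_lattice w1 w2 l -> in_lattice w1 w2 (Cmult (RtoC (IZR k)) l).
Proof.
  intros [m [n ->]]; exists (k * m)%Z, (k * n)%Z.
  rewrite !mult_IZR; C_components; ring.
Qed.

Lemma cross_lattice_integral (l l' : C) :
  in_lattice w1 w2 l -> in_lattice w1 w2 l' ->
  exists z : Z, cross l l' = IZR z * cross w1 w2.
Proof.
  intros [m [n ->]] [m' [n' ->]]; exists (m * n' - n * m')%Z.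
  rewrite minus_IZR, !mult_IZR; apply cross_lat.
Qed.

Lemma sublattice_index (l0 l1 l : C) (z : Z) :
  in_lattice w1 w2 l0 -> in_lattice w1 w2 l1 -> in_lattice w1 w2 l ->
  cross l0 l1 = IZR z * cross w1 w2 ->
  exists k0 k1 : Z, Cmult (RtoC (IZR z)) l
    = Cplus (Cmult (RtoC (IZR k0)) l0) (Cmult (RtoC (IZR k1)) l1).
Proof.
  intros H0 H1 Hl Hz.
  destruct (cross_lattice_integral l l1 Hl H1) as [k0 Hk0].
  destruct (cross_lattice_integral l0 l H0 Hl) as [k1 Hk1].
  exists k0, k1.
  pose proof (cramer l0 l1 l) as Hc; rewrite Hz, Hk0, Hk1 in Hc.
  destruct l, l0, l1; unfold Cmult, Cplus, RtoC in Hc |- *; simpl in Hc.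
  injection Hc; intros Hc2 Hc1.
  apply injective_projections; simpl; apply Rmult_eq_reg_r with (cross w1 w2);
    auto; lra.
Qed.

Lemma sublattice_multiplier (l0 l1 mu : C) (z : Z) :
  in_lattice w1 w2 l0 -> in_lattice w1 w2 l1 ->
  cross l0 l1 = IZR z * cross w1 w2 ->
  in_lattice w1 w2 (Cmult mu l0) -> in_lattice w1 w2 (Cmult mu l1) ->
  lattice_multiplier w1 w2 (Cmult (RtoC (IZR z)) mu).
Proof.
  intros H0 H1 Hz HM0 HM1 l Hl.
  destruct (sublattice_index l0 l1 l z H0 H1 Hl Hz) as [k0 [k1 Hk]].
  replace (Cmult (Cmult (RtoC (IZR z)) mu) l)
    with (Cplus (Cmult (RtoC (IZR k0)) (Cmult mu l0)) (Cmult (RtoC (IZR k1)) (Cmult mu l1))).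
  - apply in_lattice_add; apply in_lattice_zscale; assumption.
  - transitivity (Cmult mu (Cmult (RtoC (IZR z)) l)); [rewrite Hk | ]; ring.
Qed.

Lemma real_multiplier_integer (mu : C) :
  lattice_multiplier w1 w2 mu -> Im mu = 0 -> exists p : Z, mu = RtoC (IZR p).
Proof.
  intros Hmu Him.
  destruct (Hmu w1) as [p [q Hpq]].
  { exists 1%Z, 0%Z; C_components; ring. }
  exists p.
  assert (Hcross : cross (Cmult mu w1) (lat w1 w2 0 1) = Re mu * cross w1 w2).
  { destruct mu, w1, w2; unfold cross, lat, Cmult, Cplus, RtoC, Re, Im in *;
      simpl in *; subst; ring. }
  rewrite Hpq in Hcross; fold (lat w1 w2 p q) in Hcross; rewrite cross_lat in Hcross.
  assert (Hre : Re mu = IZR p) by (apply Rmult_eq_reg_r with (cross w1 w2); auto; lra).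
  destruct mu; unfold Re, Im in *; simpl in *; subst; reflexivity.
Qed.

Lemma integral_area_nonzero (z : Z) (l l' : C) :
  cross l l' = IZR z * cross w1 w2 -> cross l l' <> 0 -> IZR z <> 0.
Proof. intros Hz Harea Hz0; apply Harea; rewrite Hz, Hz0; ring. Qed.

End Lattice.

Lemma RtoC_neq_0 (t : R) : t <> 0 -> RtoC t <> RtoC 0.
Proof. intros Ht H; apply Ht; injection H; auto. Qed.

Lemma three_ratio_identities (r0 r1 r2 z01 z02 z12 y01 y02 y12 : R) :
  z01 = r0 * r1 * y01 -> z02 = r0 * r2 * y02 -> z12 = r1 * r2 * y12 ->
  y01 * y02 * z12 * r0 * r0 = z01 * z02 * y12 /\
  y01 * y02 * z12 * r0 * r1 = y02 * z12 * z01.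
Proof. intros -> -> ->; split; ring. Qed.

Lemma ratio_scale_nonzero (r0 r1 r2 z01 z02 z12 y01 y02 : R) :
  z01 <> 0 -> z02 <> 0 -> z12 <> 0 ->
  z01 = r0 * r1 * y01 -> z02 = r0 * r2 * y02 -> y01 * y02 * z12 * r0 <> 0.
Proof.
  intros N01 N02 N12 E01 E02.
  assert (r0 <> 0 /\ y01 <> 0) as [Hr0 Hy01]
    by (split; intro H0; apply N01; rewrite E01, H0; ring).
  assert (Hy02 : y02 <> 0) by (intro H0; apply N02; rewrite E02, H0; ring).
  repeat (apply Rmult_integral_contrapositive; split); assumption.
Qed.

Lemma rotation_not_real (c a : R) :
  c <> 0 -> 0 < a < PI -> Im (Cmult (RtoC c) (expi a)) <> 0.
Proof.
  intros Hc Ha; unfold Im, expi, Cmult, RtoC; simpl.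
  assert (0 < sin a) by (apply sin_gt_0; lra).
  replace (c * sin a + 0 * cos a) with (c * sin a) by ring.
  apply Rmult_integral_contrapositive; split; lra.
Qed.

Section Rigidity.

Variables w1 w2 : C.
Hypothesis hL : lattice_basis w1 w2.
Variable a : R.

Lemma periodic_pair_decomposition (p0 v : C) :
  periodic_pair_at_angle w1 w2 p0 a v ->
  exists (t rho : R) (l l' : C),
    in_lattice w1 w2 l /\ in_lattice w1 w2 l' /\ t <> 0 /\ l <> RtoC 0 /\
    v = Cmult (RtoC t) l /\ Cmult (expi a) l = Cmult (RtoC rho) l'.
Proof.
  intros [[Hv [t [l [Hl ->]]]] [_ [s [l' [Hl' Hrot]]]]].
  assert (Ht : t <> 0) by (intros ->; apply Hv; C_components; ring).
  assert (Hl0 : l <> RtoC 0) by (intros ->; apply Hv; C_components; ring).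
  exists t, (s / t), l, l'; repeat split; auto.
  pose proof (RtoC_neq_0 t Ht) as HtC.
  transitivity (Cmult (Cinv (RtoC t)) (Cmult (expi a) (Cmult (RtoC t) l)));
    [field; exact HtC |].
  rewrite Hrot, RtoC_div by exact Ht; field; exact HtC.
Qed.

(** Rotations preserve area, so the lattice areas spanned before and after the
    rotation are related by the ratios [rho]. *)
Lemma rotation_area_relation (l0 l1 l0' l1' : C) (rho0 rho1 : R) (z y : Z) :
  Cmult (expi a) l0 = Cmult (RtoC rho0) l0' ->
  Cmult (expi a) l1 = Cmult (RtoC rho1) l1' ->
  cross l0 l1 = IZR z * cross w1 w2 -> cross l0' l1' = IZR y * cross w1 w2 ->
  IZR z = rho0 * rho1 * IZR y.
Proof.
  intros H0 H1 Hz Hy.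
  pose proof (cross_expi a l0 l1) as Harea.
  rewrite H0, H1, cross_scal, Hz, Hy in Harea.
  apply Rmult_eq_reg_r with (cross w1 w2); [lra | exact hL].
Qed.

Lemma nonproportional_area (t t' : R) (l l' : C) :
  t <> 0 -> l <> RtoC 0 ->
  ~ real_proportional (Cmult (RtoC t) l) (Cmult (RtoC t') l') -> cross l l' <> 0.
Proof.
  intros Ht Hl Hnp Harea; apply Hnp.
  destruct (cross_zero_proportional l l' Hl Harea) as [c ->].
  exists (t' * c / t).
  rewrite RtoC_div by exact Ht; rewrite RtoC_mult; field; exact (RtoC_neq_0 t Ht).
Qed.

Lemma scaled_rotation_in_lattice (c rho : R) (l l' : C) (k : Z) :
  Cmult (expi a) l = Cmult (RtoC rho) l' -> in_lattice w1 w2 l' ->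
  c * rho = IZR k -> in_lattice w1 w2 (Cmult (Cmult (RtoC c) (expi a)) l).
Proof.
  intros Hrot Hl' Hk.
  replace (Cmult (Cmult (RtoC c) (expi a)) l) with (Cmult (RtoC (IZR k)) l').
  - apply in_lattice_zscale; exact Hl'.
  - rewrite <- Cmult_assoc, Hrot, <- Hk, RtoC_mult; ring.
Qed.

Lemma three_pairs_CM (p0 v0 v1 v2 : C) :
  0 < a < PI ->
  periodic_pair_at_angle w1 w2 p0 a v0 ->
  periodic_pair_at_angle w1 w2 p0 a v1 ->
  periodic_pair_at_angle w1 w2 p0 a v2 ->
  ~ real_proportional v0 v1 -> ~ real_proportional v0 v2 ->
  ~ real_proportional v1 v2 ->
  has_CM w1 w2.
Proof.
  intros Ha P0 P1 P2 N01 N02 N12.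
  destruct (periodic_pair_decomposition p0 v0 P0)
    as [t0 [r0 [l0 [l0' [L0 [L0' [T0 [Z0 [-> R0]]]]]]]]].
  destruct (periodic_pair_decomposition p0 v1 P1)
    as [t1 [r1 [l1 [l1' [L1 [L1' [T1 [Z1 [-> R1]]]]]]]]].
  destruct (periodic_pair_decomposition p0 v2 P2)
    as [t2 [r2 [l2 [l2' [L2 [L2' [T2 [Z2 [-> R2]]]]]]]]].
  (* integral areas before ([z]) and after ([y]) the rotation *)
  destruct (cross_lattice_integral w1 w2 l0 l1 L0 L1) as [z01 Hz01].
  destruct (cross_lattice_integral w1 w2 l0 l2 L0 L2) as [z02 Hz02].
  destruct (cross_lattice_integral w1 w2 l1 l2 L1 L2) as [z12 Hz12].
  destruct (cross_lattice_integral w1 w2 l0' l1' L0' L1') as [y01 Hy01].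
  destruct (cross_lattice_integral w1 w2 l0' l2' L0' L2') as [y02 Hy02].
  destruct (cross_lattice_integral w1 w2 l1' l2' L1' L2') as [y12 Hy12].
  pose proof (rotation_area_relation _ _ _ _ _ _ _ _ R0 R1 Hz01 Hy01) as E01.
  pose proof (rotation_area_relation _ _ _ _ _ _ _ _ R0 R2 Hz02 Hy02) as E02.
  pose proof (rotation_area_relation _ _ _ _ _ _ _ _ R1 R2 Hz12 Hy12) as E12.
  (* independence of the directions makes all [z_ij] nonzero *)
  pose proof (integral_area_nonzero w1 w2 _ _ _ Hz01 (nonproportional_area _ _ _ _ T0 Z0 N01)) as NZ01.
  pose proof (integral_area_nonzero w1 w2 _ _ _ Hz02 (nonproportional_area _ _ _ _ T0 Z0 N02)) as NZ02.
  pose proof (integral_area_nonzero w1 w2 _ _ _ Hz12 (nonproportional_area _ _ _ _ T1 Z1 N12)) as NZ12.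
  (* [c e^{ia}] maps [l0] and [l1] to integral multiples of [l0'], [l1'] *)
  destruct (three_ratio_identities _ _ _ _ _ _ _ _ _ E01 E02 E12) as [I0 I1].
  set (c := IZR y01 * IZR y02 * IZR z12 * r0).
  assert (Hc : c <> 0) by (apply (ratio_scale_nonzero r0 r1 r2 (IZR z01) (IZR z02)); auto).
  assert (M0 : in_lattice w1 w2 (Cmult (Cmult (RtoC c) (expi a)) l0)).
  { apply (scaled_rotation_in_lattice c r0 l0 l0' (z01 * z02 * y12)); auto.
    rewrite !mult_IZR, <- I0; unfold c; ring. }
  assert (M1 : in_lattice w1 w2 (Cmult (Cmult (RtoC c) (expi a)) l1)).
  { apply (scaled_rotation_in_lattice c r1 l1 l1' (y02 * z12 * z01)); auto.
    rewrite !mult_IZR, <- I1; unfold c; ring. }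
  exists (Cmult (RtoC (IZR z01)) (Cmult (RtoC c) (expi a))); split.
  - intros k Hk.
    apply (rotation_not_real (IZR z01 * c) a); [apply Rmult_integral_contrapositive; auto | exact Ha |].
    rewrite RtoC_mult, <- Cmult_assoc, Hk; reflexivity.
  - exact (sublattice_multiplier w1 w2 hL l0 l1 _ z01 L0 L1 Hz01 M0 M1).
Qed.

End Rigidity.

Lemma nonzero_of_cross (z w : C) : cross z w <> 0 -> z <> RtoC 0.
Proof. intros H ->; apply H; unfold cross, RtoC, Re, Im; simpl; ring. Qed.

Section Multipliers.

Variables w1 w2 : C.
Hypothesis hL : lattice_basis w1 w2.

Lemma multiplier_opp (mu : C) :
  lattice_multiplier w1 w2 mu -> lattice_multiplier w1 w2 (Copp mu).
Proof.
  intros Hmu l Hl.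
  replace (Cmult (Copp mu) l) with (Cmult (RtoC (IZR (-1))) (Cmult mu l)).
  - apply in_lattice_zscale, Hmu, Hl.
  - C_components; ring.
Qed.

Lemma multiplier_shift (mu : C) (k : Z) :
  lattice_multiplier w1 w2 mu -> lattice_multiplier w1 w2 (Cplus mu (RtoC (IZR k))).
Proof.
  intros Hmu l Hl.
  replace (Cmult (Cplus mu (RtoC (IZR k))) l)
    with (Cplus (Cmult mu l) (Cmult (RtoC (IZR k)) l)) by ring.
  apply in_lattice_add; [apply Hmu | apply in_lattice_zscale]; exact Hl.
Qed.

Lemma rotation_preserves_periodic (a r : R) (nu v : C) :
  lattice_multiplier w1 w2 nu -> expi a = Cmult (RtoC r) nu ->
  in_RL w1 w2 v -> in_RL w1 w2 (Cmult (expi a) v).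
Proof.
  intros Hnu Hrot [t [l [Hl ->]]].
  exists (r * t), (Cmult nu l); split; [exact (Hnu l Hl) |].
  rewrite Hrot, RtoC_mult; ring.
Qed.

(** For such an angle, the lattice directions [w1 + j w2] give infinitely many
    pairwise non-proportional periodic pairs. *)
Lemma multiplier_angle_pairs (a r : R) (nu p0 : C) :
  lattice_multiplier w1 w2 nu -> expi a = Cmult (RtoC r) nu ->
  infinitely_many_pairs w1 w2 p0 a.
Proof.
  intros Hnu Hrot n.
  set (f := fun j : nat => lat w1 w2 1 (Z.of_nat j)).
  assert (Hf : forall j, in_lattice w1 w2 (f j)) by (intro j; exists 1%Z, (Z.of_nat j); reflexivity).
  assert (Harea : forall j, cross (f j) (lat w1 w2 0 1) = cross w1 w2).
  { intro j; unfold f; rewrite cross_lat; simpl; ring. }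
  assert (HRL : forall j, in_RL w1 w2 (f j)).
  { intro j; exists 1, (f j); split; [apply Hf | C_components; ring]. }
  exists f; split.
  - intros j _; split; split.
    + apply nonzero_of_cross with (lat w1 w2 0 1); rewrite Harea; exact hL.
    + apply HRL.
    + apply nonzero_of_cross with (Cmult (expi a) (lat w1 w2 0 1)).
      rewrite cross_expi, Harea; exact hL.
    + apply (rotation_preserves_periodic a r nu); auto.
  - intros i j _ _ Hij [t Ht].
    pose proof (cross_proportional (f i) t) as H0.
    rewrite <- Ht in H0; unfold f in H0; rewrite cross_lat in H0.
    apply Rmult_integral in H0 as [H0 | H0]; [| exact (hL H0)].
    apply Hij, Nat2Z.inj, eq_IZR; lra.
Qed.

End Multipliers.

Definition upper_arg (X y : R) : R := acos (X / sqrt (X * X + y * y)).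

Lemma upper_arg_spec (X y : R) :
  0 < y ->
  0 < upper_arg X y < PI /\
  expi (upper_arg X y) = Cmult (RtoC (/ sqrt (X * X + y * y))) (X, y).
Proof.
  intros Hy; unfold upper_arg; set (M := sqrt (X * X + y * y)).
  assert (HM : 0 < M) by (apply sqrt_lt_R0; nra).
  assert (HMM : M * M = X * X + y * y) by (apply sqrt_sqrt; nra).
  assert (HXM : Rabs X < M).
  { rewrite <- sqrt_Rsqr_abs; unfold Rsqr; apply sqrt_lt_1; nra. }
  apply Rabs_def2 in HXM.
  assert (Hu : -1 < X / M < 1).
  { split; [apply Rmult_lt_reg_r with M | apply Rmult_lt_reg_r with M]; auto;
      unfold Rdiv; rewrite Rmult_assoc, Rinv_l by lra; lra. }
  split; [apply acos_bound_lt; auto |].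
  unfold expi; rewrite cos_acos, sin_acos by lra.
  replace (1 - Rsqr (X / M)) with (Rsqr (y / M))
    by (unfold Rsqr; field_simplify_eq; [nra | lra]).
  rewrite sqrt_Rsqr by (apply Rlt_le, Rdiv_lt_0_compat; auto).
  C_components; unfold Rdiv; ring.
Qed.

Lemma upper_arg_inj (X X' y : R) :
  0 < y -> upper_arg X y = upper_arg X' y -> X = X'.
Proof.
  intros Hy Heq.
  destruct (upper_arg_spec X y Hy) as [_ HX].
  destruct (upper_arg_spec X' y Hy) as [_ HX'].
  rewrite Heq, HX' in HX.
  injection HX; intros Himg Hre.
  assert (Hr : / sqrt (X' * X' + y * y) = / sqrt (X * X + y * y)).
  { apply Rmult_eq_reg_r with y; lra. }
  rewrite Hr in Hre; apply Rmult_eq_reg_l with (/ sqrt (X * X + y * y)); [lra |].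
  apply Rinv_neq_0_compat, Rgt_not_eq, sqrt_lt_R0; nra.
Qed.

Lemma escape_finite (g : nat -> R) (l : list R) :
  (forall i j, g i = g j -> i = j) ->
  exists K, forall k, (K <= k)%nat -> ~ In (g k) l.
Proof.
  intros Hg; induction l as [| x l [K HK]].
  - exists 0%nat; intros k _ [].
  - destruct (classic (exists j, g j = x)) as [[j Hj] | Hnone].
    + exists (Nat.max K (S j)); intros k Hk [Hx | Hx].
      * subst x; apply Hg in Hx; lia.
      * apply (HK k); [lia | exact Hx].
    + exists K; intros k Hk [Hx | Hx]; [apply Hnone; eauto | exact (HK k Hk Hx)].
Qed.

Lemma multiplier_good_angles (w1 w2 nu : C) (excluded : list R) :
  lattice_basis w1 w2 -> lattice_multiplier w1 w2 nu -> 0 < Im nu ->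
  exists a : R, 0 < a < PI /\ ~ In a excluded /\
    forall p0 : C, infinitely_many_pairs w1 w2 p0 a.
Proof.
  intros hL Hnu Him.
  set (g := fun k : nat => upper_arg (Re nu + IZR (Z.of_nat k)) (Im nu)).
  assert (Hg : forall i j, g i = g j -> i = j).
  { intros i j Hij; apply upper_arg_inj in Hij; [| exact Him].
    apply Nat2Z.inj, eq_IZR; lra. }
  destruct (escape_finite g excluded Hg) as [K HK].
  destruct (upper_arg_spec (Re nu + IZR (Z.of_nat K)) (Im nu) Him) as [Ha Hrot].
  exists (g K); split; [exact Ha | split; [apply HK; lia |]].
  intro p0; apply (multiplier_angle_pairs w1 w2 hL (g K)
    (/ sqrt ((Re nu + IZR (Z.of_nat K)) * (Re nu + IZR (Z.of_nat K)) + Im nu * Im nu))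
    (Cplus nu (RtoC (IZR (Z.of_nat K))))).
  - apply multiplier_shift, Hnu.
  - unfold g; rewrite Hrot; destruct nu; unfold Re, Im; C_components; ring.
Qed.

Theorem theorem1p5 (w1 w2 : C) (hL : lattice_basis w1 w2) :
  (forall (p0 : C) (a : R), (0 < a < PI)%R ->
     at_least_n_pairs w1 w2 p0 a 4 -> has_CM w1 w2) /\
  (has_CM w1 w2 ->
     forall excluded : list R, exists a : R,
       (0 < a < PI)%R /\ ~ In a excluded /\
       forall p0 : C, infinitely_many_pairs w1 w2 p0 a).
Proof.
  split.
  - (* three of the four pairs already suffice *)
    intros p0 a Ha [f [Hpair Hnp]].
    apply (three_pairs_CM w1 w2 hL a p0 (f 0%nat) (f 1%nat) (f 2%nat) Ha);
      [apply Hpair | apply Hpair | apply Hpair | apply Hnp | apply Hnp | apply Hnp]; lia.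
  - intros [mu [Hnot_int Hmu]] excluded.
    assert (Him : Im mu <> 0).
    { intro Him; destruct (real_multiplier_integer w1 w2 hL mu Hmu Him) as [p Hp].
      exact (Hnot_int p Hp). }
    (* use [mu] or [-mu], whichever lies in the upper half-plane *)
    destruct (Rlt_or_le 0 (Im mu)) as [Hpos | Hneg].
    + exact (multiplier_good_angles w1 w2 mu excluded hL Hmu Hpos).
    + apply (multiplier_good_angles w1 w2 (Copp mu) excluded hL).
      * exact (multiplier_opp w1 w2 mu Hmu).
      * destruct mu; unfold Im in *; simpl in *; lra.
Qed.
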